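(* Let $G$ be a graph with $n\ge 2$ vertices, $m$ edges and minimum degree $\delta$. Then $$EE(G) \ge e^{\frac{2(m-\delta)}{n-1}} + (n-1) - \frac{2(m-\delta)}{n-1},$$ with equality if and only if $G$ is isomorphic to the edgeless graph $\overline{K_n}$.
   Context: All graphs are finite, simple and undirected. For a graph $G$ with adjacency matrix $A(G)$ having eigenvalues $\lambda_1\ge\cdots\ge\lambda_n$, the Estrada index is $EE(G)=\sum_{i=1}^n e^{\lambda_i}$. $\overline{K_n}$ denotes the graph on $n$ vertices with no edges. *)

From Stdlib Require Import Reals Lra Lia Arith.
Open Scope R_scope.

(* A graph on n vertices is encoded by vertices 0..n-1 and a boolean
   adjacency relation adj; only its values on 0..n-1 matter. *)

Fixpoint sumR (k : nat) (f : nat -> R) : R :=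
  match k with
  | O => 0
  | S k' => sumR k' f + f k'
  end.

Fixpoint sumN (k : nat) (f : nat -> nat) : nat :=
  match k with
  | O => 0%nat
  | S k' => (sumN k' f + f k')%nat
  end.

Fixpoint minN (k : nat) (f : nat -> nat) : nat :=
  match k with
  | O => f 0%nat
  | S k' => Nat.min (minN k' f) (f k)
  end.

Definition b2n (b : bool) : nat := if b then 1%nat else 0%nat.

Definition degree (n : nat) (adj : nat -> nat -> bool) (i : nat) : nat :=
  sumN n (fun j => b2n (adj i j)).

Definition num_edges (n : nat) (adj : nat -> nat -> bool) : nat :=
  sumN n (fun i => sumN i (fun j => b2n (adj i j))).

(* minimum degree (for n >= 1) *)
Definition min_degree (n : nat) (adj : nat -> nat -> bool) : nat :=
  minN (n - 1) (degree n adj).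

Definition adj_matrix (adj : nat -> nat -> bool) (i j : nat) : R :=
  if adj i j then 1 else 0.

(* lam 0, ..., lam (n-1) is the spectrum (eigenvalues with multiplicity) of
   the real symmetric n x n matrix A: there is an orthonormal basis
   v 0, ..., v (n-1) of R^n with A (v k) = lam k * v k. *)
Definition is_spectrum (n : nat) (A : nat -> nat -> R) (lam : nat -> R) : Prop :=
  exists v : nat -> nat -> R,
    (forall k l, (k < n)%nat -> (l < n)%nat ->
       sumR n (fun i => v k i * v l i) = if Nat.eqb k l then 1 else 0) /\
    (forall k i, (k < n)%nat -> (i < n)%nat ->
       sumR n (fun j => A i j * v k j) = lam k * v k i).

Definition estrada (n : nat) (lam : nat -> R) : R :=
  sumR n (fun k => exp (lam k)).

(* Since A has zero trace, the eigenvalues sum to 0 and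
     EE = n + sum_k (e^(lam_k) - 1 - lam_k) >= n + e^(lam_1) - 1 - lam_1
   for the largest eigenvalue lam_1, every summand being nonnegative.  The
   Rayleigh quotient of the 0/1 vector vanishing only at a vertex of minimum
   degree is 2(m - delta)/(n - 1) = t >= 0, so lam_1 >= t, and x |-> e^x - x is
   increasing on [0, oo).  Equality forces all eigenvalues but lam_1 to vanish,
   hence lam_1 = 0 by the trace, hence A = 0 by the spectral decomposition
   A = sum_k lam_k v_k v_k^T. *)

From Stdlib Require Import Reals Lra Lia Arith.
From mathcomp Require ssreflect ssrfun ssrbool ssrnat eqtype fintype bigop ssralg matrix Rstruct.
Open Scope R_scope.

Lemma sumR_ext k f g : (forall i, (i < k)%nat -> f i = g i) -> sumR k f = sumR k g.
Proof.
  induction k as [|k IH]; intros H; simpl; [reflexivity|].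
  rewrite IH by (intros; apply H; lia). rewrite H by lia. reflexivity.
Qed.

Lemma sumR_add k f g : sumR k (fun i => f i + g i) = sumR k f + sumR k g.
Proof. induction k as [|k IH]; simpl; [ring | rewrite IH; ring]. Qed.

Lemma sumR_mult_l k c f : sumR k (fun i => c * f i) = c * sumR k f.
Proof. induction k as [|k IH]; simpl; [ring | rewrite IH; ring]. Qed.

Lemma sumR_mult_r k c f : sumR k (fun i => f i * c) = sumR k f * c.
Proof. induction k as [|k IH]; simpl; [ring | rewrite IH; ring]. Qed.

Lemma sumR_const k c : sumR k (fun _ => c) = INR k * c.
Proof.
  induction k as [|k IH]; [simpl; ring|].
  rewrite S_INR. simpl sumR. rewrite IH. ring.
Qed.

Lemma sumR_le k f g : (forall i, (i < k)%nat -> f i <= g i) -> sumR k f <= sumR k g.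
Proof.
  induction k as [|k IH]; intros H; simpl; [lra|].
  assert (sumR k f <= sumR k g) by (apply IH; intros; apply H; lia).
  assert (f k <= g k) by (apply H; lia).
  lra.
Qed.

Lemma sumR_ge0 k f : (forall i, (i < k)%nat -> 0 <= f i) -> 0 <= sumR k f.
Proof.
  intros H. replace 0 with (sumR k (fun _ => 0)) by (rewrite sumR_const; ring).
  apply sumR_le; assumption.
Qed.

Lemma sumR_ge0_eq0 k f : (forall i, (i < k)%nat -> 0 <= f i) -> sumR k f = 0 ->
  forall i, (i < k)%nat -> f i = 0.
Proof.
  induction k as [|k IH]; intros H E i Hi; [lia|]. simpl in E.
  assert (0 <= sumR k f) by (apply sumR_ge0; intros; apply H; lia).
  assert (0 <= f k) by (apply H; lia).
  destruct (Nat.eq_dec i k) as [->|ne]; [lra|].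
  apply IH; [intros; apply H; lia | lra | lia].
Qed.

Lemma sumR_swap k l f :
  sumR k (fun i => sumR l (fun j => f i j)) = sumR l (fun j => sumR k (fun i => f i j)).
Proof.
  induction k as [|k IH]; simpl.
  - rewrite sumR_const. ring.
  - rewrite IH, <- sumR_add. reflexivity.
Qed.

Lemma sumR_kronecker k i f : (i < k)%nat ->
  sumR k (fun j => if Nat.eqb j i then f j else 0) = f i.
Proof.
  induction k as [|k IH]; intros Hi; [lia|]. simpl.
  destruct (Nat.eq_dec i k) as [->|ne].
  - rewrite Nat.eqb_refl, (sumR_ext k _ (fun _ => 0)), sumR_const; [ring|].
    intros j Hj. destruct (Nat.eqb_spec j k); [lia | reflexivity].
  - rewrite IH by lia. destruct (Nat.eqb_spec k i); [lia | ring].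
Qed.

Lemma sumR_remove k p f : (p < k)%nat ->
  sumR k (fun i => if Nat.eqb i p then 0 else f i) = sumR k f - f p.
Proof.
  intros Hp. rewrite <- (sumR_kronecker k p f Hp).
  rewrite (sumR_ext k f (fun i => (if Nat.eqb i p then f i else 0)
                                + (if Nat.eqb i p then 0 else f i)))
    by (intros i _; destruct (Nat.eqb i p); ring).
  rewrite sumR_add. ring.
Qed.

Lemma sumR_symmetric_lower k (A : nat -> nat -> R) :
  (forall i j, A i j = A j i) -> (forall i, A i i = 0) ->
  2 * sumR k (fun i => sumR i (A i)) = sumR k (fun i => sumR k (A i)).
Proof.
  intros Hsym Hdiag. induction k as [|k IH]; simpl; [ring|].
  rewrite (sumR_ext k (fun i => sumR k (A i) + A i k)
                      (fun i => sumR k (A i) + A k i)) by (intros; rewrite Hsym; reflexivity).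
  rewrite sumR_add, <- IH, Hdiag. ring.
Qed.

Lemma INR_sumN k f : INR (sumN k f) = sumR k (fun i => INR (f i)).
Proof. induction k as [|k IH]; simpl; [reflexivity | rewrite plus_INR, IH; reflexivity]. Qed.

Lemma argmax_exists (g : nat -> R) n : (1 <= n)%nat ->
  exists p, (p < n)%nat /\ forall k, (k < n)%nat -> g k <= g p.
Proof.
  induction n as [|n IH]; intros Hn; [lia|].
  destruct (Nat.eq_dec n 0) as [->|ne].
  - exists 0%nat. split; [lia|]. intros k Hk. replace k with 0%nat by lia. lra.
  - destruct IH as [p [Hp Hmax]]; [lia|].
    destruct (Rle_dec (g n) (g p)).
    + exists p. split; [lia|]. intros k Hk.
      destruct (Nat.eq_dec k n) as [->|]; [lra | apply Hmax; lia].
    + exists n. split; [lia|]. intros k Hk.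
      destruct (Nat.eq_dec k n) as [->|]; [lra|].
      specialize (Hmax k ltac:(lia)). lra.
Qed.

Lemma minN_attained k f : exists p, (p <= k)%nat /\ minN k f = f p.
Proof.
  induction k as [|k [p [Hp E]]]; simpl; [exists 0%nat; split; auto|].
  rewrite E. destruct (Nat.le_ge_cases (f p) (f (S k))).
  - exists p. split; [lia | apply Nat.min_l; assumption].
  - exists (S k). split; [lia | apply Nat.min_r; assumption].
Qed.

Definition dot (n : nat) (x y : nat -> R) : R := sumR n (fun i => x i * y i).

Definition qform (n : nat) (A : nat -> nat -> R) (x : nat -> R) : R :=
  sumR n (fun i => sumR n (fun j => A i j * x i * x j)).

Lemma qform_ge0 n A x : (forall i j, 0 <= A i j) -> (forall i, 0 <= x i) -> 0 <= qform n A x.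
Proof.
  intros HA Hx. apply sumR_ge0; intros i _; apply sumR_ge0; intros j _.
  pose proof (HA i j). pose proof (Hx i). pose proof (Hx j).
  apply Rmult_le_pos; [apply Rmult_le_pos|]; assumption.
Qed.

Definition orthonormal (n : nat) (v : nat -> nat -> R) : Prop :=
  forall k l, (k < n)%nat -> (l < n)%nat -> dot n (v k) (v l) = if Nat.eqb k l then 1 else 0.

Section OrthonormalTranspose.
Import ssreflect ssrfun ssrbool eqtype ssrnat fintype bigop ssralg matrix Rstruct.
Import GRing.Theory.

Lemma sumR_big (k : nat) (f : nat -> R) : sumR k f = (\sum_(i < k) f i)%R.
Proof. by elim: k => [|k IH]; rewrite ?big_ord0 // big_ord_recr /= IH. Qed.

(* A square matrix with a right inverse is invertible: [M M^T = 1] gives [M^T M = 1]. *)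
Lemma orthonormal_transpose n v : orthonormal n v -> orthonormal n (fun i k => v k i).
Proof.
move=> Hv i j /ltP Hi /ltP Hj.
pose M : 'M[R]_n := (\matrix_(k < n, l < n) v k l)%R.
have dotM (k l : 'I_n) : dot n (v k) (v l) = (M *m M^T)%R k l.
  by rewrite /dot sumR_big !mxE; apply: eq_bigr => r _; rewrite !mxE.
have MMt : (M *m M^T = 1%:M)%R.
  apply/matrixP => k l; rewrite -dotM Hv; try exact/ltP.
  rewrite !mxE; case: (Nat.eqb_spec k l) => [/val_inj ->|kl]; first by rewrite eqxx.
  by case: eqP => // E; case: kl; rewrite E.
have /matrixP/(_ (Ordinal Hi) (Ordinal Hj)) := mulmx1C MMt.
rewrite !mxE /dot sumR_big => E.
rewrite (eq_bigr (fun k : 'I_n => M^T (Ordinal Hi) k * M k (Ordinal Hj))%R); last first.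
  by move=> k _; rewrite !mxE.
rewrite E; case: (Nat.eqb_spec i j) => [ij|ij].
  by rewrite (_ : Ordinal Hi = Ordinal Hj) ?eqxx //; apply: val_inj.
by case: eqP => // -[].
Qed.

End OrthonormalTranspose.

Section Spectral.

Variables (n : nat) (A : nat -> nat -> R) (lam : nat -> R) (v : nat -> nat -> R).
Hypothesis Hort : orthonormal n v.
Hypothesis Heig : forall k i, (k < n)%nat -> (i < n)%nat ->
  sumR n (fun j => A i j * v k j) = lam k * v k i.

Let Hcol : forall l i, (l < n)%nat -> (i < n)%nat ->
  sumR n (fun k => v k l * v k i) = if Nat.eqb l i then 1 else 0 :=
  orthonormal_transpose n v Hort.

Lemma orthonormal_expansion x i : (i < n)%nat ->
  sumR n (fun k => dot n (v k) x * v k i) = x i.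
Proof.
  intros Hi. unfold dot.
  rewrite (sumR_ext n _ (fun k => sumR n (fun l => x l * (v k l * v k i))))
    by (intros; rewrite <- sumR_mult_r; apply sumR_ext; intros; ring).
  rewrite sumR_swap, <- (sumR_kronecker n i x Hi).
  apply sumR_ext; intros l Hl.
  rewrite sumR_mult_l, Hcol by assumption. destruct (Nat.eqb l i); ring.
Qed.

Lemma parseval x : sumR n (fun k => dot n (v k) x * dot n (v k) x) = dot n x x.
Proof.
  transitivity (sumR n (fun k => sumR n (fun i => dot n (v k) x * v k i * x i))).
  - apply sumR_ext; intros k _.
    rewrite (sumR_ext n _ (fun i => dot n (v k) x * (v k i * x i))) by (intros; ring).
    rewrite sumR_mult_l. reflexivity.
  - rewrite sumR_swap. apply sumR_ext; intros i Hi.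
    rewrite sumR_mult_r, orthonormal_expansion by assumption. reflexivity.
Qed.

Lemma spectral_decomposition i j : (i < n)%nat -> (j < n)%nat ->
  sumR n (fun k => lam k * v k i * v k j) = A i j.
Proof.
  intros Hi Hj. rewrite <- (orthonormal_expansion (A i) j Hj).
  apply sumR_ext; intros k Hk. f_equal.
  rewrite <- Heig by assumption. apply sumR_ext; intros; ring.
Qed.

Lemma qform_spectral x :
  qform n A x = sumR n (fun k => lam k * (dot n (v k) x * dot n (v k) x)).
Proof.
  transitivity (sumR n (fun i => sumR n (fun k => sumR n (fun j =>
                  lam k * v k i * v k j * x i * x j)))).
  - apply sumR_ext; intros i Hi. rewrite sumR_swap. apply sumR_ext; intros j Hj.
    rewrite <- spectral_decomposition, <- !sumR_mult_r by assumption.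
    apply sumR_ext; intros; ring.
  - rewrite sumR_swap. apply sumR_ext; intros k _. unfold dot.
    rewrite (sumR_ext n _ (fun i => lam k * (v k i * x i) * sumR n (fun j => v k j * x j))).
    + rewrite sumR_mult_r, sumR_mult_l. ring.
    + intros i _. rewrite <- sumR_mult_l. apply sumR_ext; intros; ring.
Qed.

Lemma qform_le_max_eigenvalue x p : (forall k, (k < n)%nat -> lam k <= lam p) ->
  qform n A x <= lam p * dot n x x.
Proof.
  intros Hmax. rewrite qform_spectral, <- parseval, <- sumR_mult_l.
  apply sumR_le; intros k Hk.
  pose proof (Hmax k Hk). pose proof (Rle_0_sqr (dot n (v k) x)). unfold Rsqr in *. nra.
Qed.

Lemma sum_eigenvalues : sumR n lam = sumR n (fun i => A i i).
Proof.
  transitivity (sumR n (fun k => sumR n (fun i => lam k * v k i * v k i))).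
  - apply sumR_ext; intros k Hk.
    rewrite (sumR_ext n _ (fun i => lam k * (v k i * v k i))) by (intros; ring).
    rewrite sumR_mult_l. fold (dot n (v k) (v k)). rewrite Hort, Nat.eqb_refl by assumption. ring.
  - rewrite sumR_swap. apply sumR_ext; intros i Hi. apply spectral_decomposition; assumption.
Qed.

Lemma eigenvalues_eq0_iff :
  (forall k, (k < n)%nat -> lam k = 0) <->
  (forall i j, (i < n)%nat -> (j < n)%nat -> A i j = 0).
Proof.
  split.
  - intros H0 i j Hi Hj. rewrite <- spectral_decomposition by assumption.
    rewrite (sumR_ext n _ (fun _ => 0)) by (intros k Hk; rewrite H0 by assumption; ring).
    rewrite sumR_const. ring.
  - intros H0 k Hk.
    transitivity (sumR n (fun i => v k i * (lam k * v k i))).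
    + rewrite (sumR_ext n _ (fun i => lam k * (v k i * v k i))) by (intros; ring).
      rewrite sumR_mult_l. fold (dot n (v k) (v k)). rewrite Hort, Nat.eqb_refl by assumption. ring.
    + rewrite (sumR_ext n _ (fun _ => 0)), sumR_const; [ring|].
      intros i Hi. rewrite <- Heig by assumption.
      rewrite (sumR_ext n _ (fun _ => 0)), sumR_const; [ring|].
      intros j Hj. rewrite H0 by assumption. ring.
Qed.

End Spectral.

Definition exp_excess (x : R) : R := exp x - 1 - x.

Lemma exp_excess_ge0 x : 0 <= exp_excess x.
Proof. unfold exp_excess. pose proof (exp_ineq1_le x). lra. Qed.

Lemma exp_excess_eq0 x : exp_excess x = 0 -> x = 0.
Proof.
  unfold exp_excess. intros E. destruct (Req_dec x 0) as [|ne]; [assumption|].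
  pose proof (exp_ineq1 x ne). lra.
Qed.

Lemma exp_excess_le a b : 0 <= b <= a -> exp_excess b <= exp_excess a.
Proof.
  unfold exp_excess. intros Hab.
  assert (E : exp a = exp b * exp (a - b)) by (rewrite <- exp_plus; f_equal; ring).
  pose proof (exp_ineq1_le (a - b)). pose proof (exp_ineq1_le b).
  nra.
Qed.

Lemma estrada_traceless n lam : sumR n lam = 0 ->
  estrada n lam = INR n + sumR n (fun k => exp_excess (lam k)).
Proof.
  intros Htr. unfold estrada.
  rewrite (sumR_ext n _ (fun k => exp_excess (lam k) + (1 + lam k)))
    by (intros; unfold exp_excess; ring).
  rewrite !sumR_add, sumR_const, Htr. ring.
Qed.

Section TracelessSpectrum.

Variables (n : nat) (lam : nat -> R) (p : nat).
Hypothesis Hp : (p < n)%nat.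
Hypothesis Htr : sumR n lam = 0.

Lemma estrada_traceless_split :
  estrada n lam = INR n + exp_excess (lam p)
                  + sumR n (fun k => if Nat.eqb k p then 0 else exp_excess (lam k)).
Proof. rewrite estrada_traceless, sumR_remove by assumption. ring. Qed.

Lemma estrada_ge_excess : INR n + exp_excess (lam p) <= estrada n lam.
Proof.
  rewrite estrada_traceless_split.
  assert (0 <= sumR n (fun k => if Nat.eqb k p then 0 else exp_excess (lam k))).
  { apply sumR_ge0; intros k _. destruct (Nat.eqb k p); [lra | apply exp_excess_ge0]. }
  lra.
Qed.

Lemma estrada_eq_excess_iff :
  estrada n lam = INR n + exp_excess (lam p) <-> (forall k, (k < n)%nat -> lam k = 0).
Proof.
  split.
  - rewrite estrada_traceless_split. intros E.
    assert (Hnn : forall k, (k < n)%nat ->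
              0 <= (if Nat.eqb k p then 0 else exp_excess (lam k))).
    { intros k _. destruct (Nat.eqb k p); [lra | apply exp_excess_ge0]. }
    assert (Hother : forall k, (k < n)%nat -> k <> p -> lam k = 0).
    { intros k Hk Hkp. apply exp_excess_eq0.
      pose proof (sumR_ge0_eq0 n (fun k => if Nat.eqb k p then 0 else exp_excess (lam k))
                    Hnn ltac:(lra) k Hk) as Hz.
      cbv beta in Hz. destruct (Nat.eqb_spec k p); [contradiction | exact Hz]. }
    assert (Hlp : lam p = 0).
    { pose proof (sumR_remove n p lam Hp) as Hrem.
      rewrite (sumR_ext n _ (fun _ => 0)), sumR_const, Htr in Hrem; [lra|].
      intros k Hk. destruct (Nat.eqb_spec k p); [reflexivity | apply Hother; assumption]. }
    intros k Hk. destruct (Nat.eq_dec k p) as [->|]; [assumption | apply Hother; assumption].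
  - intros H0. rewrite estrada_traceless, (H0 p Hp) by assumption.
    rewrite (sumR_ext n _ (fun _ => 0)), sumR_const.
    + unfold exp_excess. rewrite exp_0. ring.
    + intros k Hk. rewrite H0 by assumption. unfold exp_excess. rewrite exp_0. ring.
Qed.

End TracelessSpectrum.

Section Graph.

Variables (n : nat) (adj : nat -> nat -> bool).
Hypothesis Hsym : forall i j, adj i j = adj j i.
Hypothesis Hirr : forall i, adj i i = false.

Lemma adj_matrix_01 i j : adj_matrix adj i j = 0 \/ adj_matrix adj i j = 1.
Proof. unfold adj_matrix. destruct (adj i j); auto. Qed.

Lemma adj_matrix_eq0_iff :
  (forall i j, (i < n)%nat -> (j < n)%nat -> adj_matrix adj i j = 0) <->
  (forall i j, (i < n)%nat -> (j < n)%nat -> adj i j = false).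
Proof.
  unfold adj_matrix. split; intros H i j Hi Hj; specialize (H i j Hi Hj).
  - destruct (adj i j); [lra | reflexivity].
  - rewrite H. reflexivity.
Qed.

Lemma trace_adj_matrix : sumR n (fun i => adj_matrix adj i i) = 0.
Proof.
  rewrite (sumR_ext n _ (fun _ => 0)), sumR_const; [ring|].
  intros i _. unfold adj_matrix. rewrite Hirr. reflexivity.
Qed.

Lemma INR_degree i : INR (degree n adj i) = sumR n (adj_matrix adj i).
Proof.
  unfold degree. rewrite INR_sumN. apply sumR_ext; intros j _.
  unfold adj_matrix, b2n. destruct (adj i j); reflexivity.
Qed.

Lemma handshake : 2 * INR (num_edges n adj) = sumR n (fun i => sumR n (adj_matrix adj i)).
Proof.
  unfold num_edges. rewrite INR_sumN, <- sumR_symmetric_lower.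
  - f_equal. apply sumR_ext; intros i _. rewrite INR_sumN. apply sumR_ext; intros j _.
    unfold adj_matrix, b2n. destruct (adj i j); reflexivity.
  - intros i j. unfold adj_matrix. rewrite Hsym. reflexivity.
  - intros i. unfold adj_matrix. rewrite Hirr. reflexivity.
Qed.

Lemma min_degree_attained : (1 <= n)%nat ->
  exists q, (q < n)%nat /\ min_degree n adj = degree n adj q.
Proof.
  intros Hn. destruct (minN_attained (n - 1) (degree n adj)) as [q [Hq E]].
  exists q. split; [lia | exact E].
Qed.

Lemma qform_delete_vertex q : (q < n)%nat ->
  qform n (adj_matrix adj) (fun i => if Nat.eqb i q then 0 else 1)
  = 2 * INR (num_edges n adj) - 2 * INR (degree n adj q).
Proof.
  intros Hq. unfold qform.
  transitivity (sumR n (fun i => if Nat.eqb i q then 0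
                                 else sumR n (adj_matrix adj i) - adj_matrix adj i q)).
  - apply sumR_ext; intros i _. destruct (Nat.eqb i q).
    + rewrite (sumR_ext n _ (fun _ => 0)), sumR_const by (intros; ring). ring.
    + rewrite <- sumR_remove by assumption.
      apply sumR_ext; intros j _. destruct (Nat.eqb j q); ring.
  - rewrite sumR_remove by assumption.
    rewrite (sumR_ext n _ (fun i => sumR n (adj_matrix adj i) + -1 * adj_matrix adj q i))
      by (intros i _; unfold adj_matrix; rewrite (Hsym i q); ring).
    rewrite sumR_add, sumR_mult_l, <- handshake, INR_degree.
    replace (adj_matrix adj q q) with 0 by (unfold adj_matrix; rewrite Hirr; reflexivity).
    ring.
Qed.

Lemma min_degree_le_num_edges : (1 <= n)%nat ->
  INR (min_degree n adj) <= INR (num_edges n adj).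
Proof.
  intros Hn. destruct min_degree_attained as [q [Hq ->]]; [assumption|].
  pose proof (qform_ge0 n (adj_matrix adj) (fun i => if Nat.eqb i q then 0 else 1)) as H.
  rewrite qform_delete_vertex in H by assumption.
  assert (0 <= 2 * INR (num_edges n adj) - 2 * INR (degree n adj q)); [|lra].
  apply H.
  - intros i j. destruct (adj_matrix_01 i j) as [-> | ->]; lra.
  - intros i. destruct (Nat.eqb i q); lra.
Qed.

Lemma largest_eigenvalue_ge (lam : nat -> R) (v : nat -> nat -> R) p :
  (1 <= n)%nat -> orthonormal n v ->
  (forall k i, (k < n)%nat -> (i < n)%nat ->
     sumR n (fun j => adj_matrix adj i j * v k j) = lam k * v k i) ->
  (forall k, (k < n)%nat -> lam k <= lam p) ->
  2 * (INR (num_edges n adj) - INR (min_degree n adj)) <= lam p * (INR n - 1).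
Proof.
  intros Hn Hort Heig Hmax.
  destruct min_degree_attained as [q [Hq ->]]; [assumption|].
  set (x := fun i => if Nat.eqb i q then 0 else 1).
  assert (Hxx : dot n x x = INR n - 1).
  { unfold dot. rewrite (sumR_ext n _ (fun i => if Nat.eqb i q then 0 else 1))
      by (intros i _; unfold x; destruct (Nat.eqb i q); ring).
    rewrite sumR_remove, sumR_const by assumption. ring. }
  pose proof (qform_le_max_eigenvalue n _ lam v Hort Heig x p Hmax) as H.
  rewrite Hxx in H. unfold x in H. rewrite qform_delete_vertex in H by assumption. lra.
Qed.

End Graph.

Theorem mainTheorem5 (n : nat) (adj : nat -> nat -> bool)
  (Hn : (2 <= n)%nat)
  (Hsym : forall i j, adj i j = adj j i)
  (Hirr : forall i, adj i i = false)
  (lam : nat -> R)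
  (Hspec : is_spectrum n (adj_matrix adj) lam) :
  let t := 2 * (INR (num_edges n adj) - INR (min_degree n adj)) / (INR n - 1) in
  estrada n lam >= exp t + (INR n - 1) - t /\
  (estrada n lam = exp t + (INR n - 1) - t <->
   (forall i j, (i < n)%nat -> (j < n)%nat -> adj i j = false)).
Proof.
  intros t. destruct Hspec as [v [Hort Heig]].
  destruct (argmax_exists lam n) as [p [Hp Hmax]]; [lia|].
  assert (Htr : sumR n lam = 0).
  { rewrite (sum_eigenvalues n _ lam v Hort Heig). apply trace_adj_matrix; assumption. }
  assert (Ht : 0 <= t <= lam p).
  { pose proof (le_INR 2 n Hn). simpl INR in *.
    pose proof (largest_eigenvalue_ge n adj Hsym Hirr lam v p ltac:(lia) Hort Heig Hmax).
    pose proof (min_degree_le_num_edges n adj Hsym Hirr ltac:(lia)).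
    assert (t * (INR n - 1) = 2 * (INR (num_edges n adj) - INR (min_degree n adj)))
      by (unfold t; field; lra).
    split; nra. }
  pose proof (estrada_ge_excess n lam p Hp Htr).
  pose proof (exp_excess_le (lam p) t Ht).
  replace (exp t + (INR n - 1) - t) with (INR n + exp_excess t) by (unfold exp_excess; ring).
  rewrite <- adj_matrix_eq0_iff, <- (eigenvalues_eq0_iff n _ lam v Hort Heig),
          <- (estrada_eq_excess_iff n lam p Hp Htr).
  split; [lra|]. split; intros E; [lra|].
  assert (Hlp : lam p = 0) by (apply (estrada_eq_excess_iff n lam p Hp Htr); assumption).
  replace t with 0 by lra. rewrite E, Hlp. reflexivity.
Qed.
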